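(* Let $\Pi$ be a 2-dimensional real vector space with a fixed nonzero constant area form $\Omega\in\Lambda^2\Pi^*$, and let $\nabla$ be a torsion-free connection with skew-symmetric Ricci tensor on a nonempty connected open set $U\subset\Pi$ which is invariant under the infinitesimal action of $\mathrm{SL}(\Pi)$ (i.e. for every $A\in\mathfrak{sl}(\Pi)$, the vector field $y\mapsto Ay$ on $U$ is an infinitesimal affine transformation of $\nabla$). Then there exists $c\in\mathbb{R}$ such that $\nabla_u v=2c[\Omega(w,u)v+\Omega(w,v)u]-c^2\Omega(w,u)\Omega(w,v)w$ for all vector fields $u$ and all constant vector fields $v$ on $U$, where $w$ denotes the radial (identity) vector field on $\Pi$.
   Context: All objects are $C^\infty$. An infinitesimal affine transformation of a connection is a vector field whose local flows preserve the connection. *)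

(* Stdlib reals + Coquelicot.  Pi is identified with R*R via a basis. *)
From Stdlib Require Import Reals.
From Coquelicot Require Import Coquelicot.
Open Scope R_scope.

Definition vec := (R * R)%type.

Inductive ix := e1 | e2.

Definition coord (i : ix) (v : vec) : R := match i with e1 => fst v | e2 => snd v end.
Definition basis (i : ix) : vec := match i with e1 => (1, 0) | e2 => (0, 1) end.
Definition mkvec (f : ix -> R) : vec := (f e1, f e2).
Definition sumix (f : ix -> R) : R := f e1 + f e2.

Definition vadd (a b : vec) : vec := (fst a + fst b, snd a + snd b).
Definition vscale (t : R) (a : vec) : vec := (t * fst a, t * snd a).

Definition pd (i : ix) (f : vec -> R) (p : vec) : R :=
  Derive (fun t => f (vadd p (vscale t (basis i)))) 0.

Fixpoint Cn (U : vec -> Prop) (n : nat) (f : vec -> R) : Prop :=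
  (forall p, U p -> continuous f p) /\
  match n with
  | O => True
  | S m => (forall p, U p -> forall i,
              ex_derive (fun t => f (vadd p (vscale t (basis i)))) 0)
           /\ (forall i, Cn U m (pd i f))
  end.

Definition smooth_on (U : vec -> Prop) (f : vec -> R) : Prop := forall n, Cn U n f.

Definition connected_set (U : vec -> Prop) : Prop :=
  forall V W : vec -> Prop, open V -> open W ->
    (forall p, U p -> V p \/ W p) ->
    (forall p, U p -> V p -> W p -> False) ->
    (exists p, U p /\ V p) -> (exists p, U p /\ W p) -> False.

(* A connection on U is given by its Christoffel symbols
   Gam k i j p = Gamma^k_{ij}(p), i.e. nabla_{d_i} d_j = sum_k Gamma^k_{ij} d_k. *)
Definition christoffel := ix -> ix -> ix -> vec -> R.

Definition Gamma (Gam : christoffel) (p u v : vec) : vec :=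
  mkvec (fun k => sumix (fun i => sumix (fun j => Gam k i j p * coord i u * coord j v))).

Definition ddir (v : vec -> vec) (p a : vec) : vec :=
  mkvec (fun k => Derive (fun t => coord k (v (vadd p (vscale t a)))) 0).

Definition nabla (Gam : christoffel) (u v : vec -> vec) (p : vec) : vec :=
  vadd (ddir v p (u p)) (Gamma Gam p (u p) (v p)).

Definition torsion_free (U : vec -> Prop) (Gam : christoffel) : Prop :=
  forall p, U p -> forall k i j, Gam k i j p = Gam k j i p.

(* R(d_i,d_j) d_k = sum_l Rm l i j k d_l,  R(X,Y) = [nabla_X, nabla_Y] - nabla_[X,Y] *)
Definition Rm (Gam : christoffel) (l i j k : ix) (p : vec) : R :=
  pd i (Gam l j k) p - pd j (Gam l i k) p
  + sumix (fun m => Gam l i m p * Gam m j k p - Gam l j m p * Gam m i k p).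

Definition Ric (Gam : christoffel) (j k : ix) (p : vec) : R :=
  sumix (fun i => Rm Gam i i j k p).

Definition ricci_skew (U : vec -> Prop) (Gam : christoffel) : Prop :=
  forall p, U p -> forall j k, Ric Gam j k p = - Ric Gam k j p.

Definition mat := ix -> ix -> R.
Definition mapply (M : mat) (v : vec) : vec :=
  mkvec (fun i => sumix (fun j => M i j * coord j v)).
Definition in_sl2 (A : mat) : Prop := A e1 e1 + A e2 e2 = 0.

(* M t = exp (t A): M 0 = I and M' = A M. The (global) flow of the linear
   vector field y |-> A y is phi_t y = M t y. *)
Definition is_exp_flow (A : mat) (M : R -> mat) : Prop :=
  (forall i j, M 0 i j = if (match i, j with e1, e1 | e2, e2 => true | _, _ => false end)
                         then 1 else 0) /\
  (forall t i j, is_derive (fun s => M s i j) t (sumix (fun m => A i m * M t m j))).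

(* The vector field y |-> A y on U is an infinitesimal affine transformation:
   its local flow on U (phi_t defined at y as long as the trajectory from time 0
   to time t stays in U) preserves nabla.  Since phi_t is linear,
   D phi_t = M t and D^2 phi_t = 0, so phi_t preserves nabla at y iff
   Gamma_{phi_t y}(M t u, M t v) = M t (Gamma_y(u, v)). *)
Definition inf_affine_linear (U : vec -> Prop) (Gam : christoffel) (A : mat) : Prop :=
  forall M, is_exp_flow A M ->
  forall t y, (forall s, Rmin 0 t <= s <= Rmax 0 t -> U (mapply (M s) y)) ->
  forall u v, Gamma Gam (mapply (M t) y) (mapply (M t) u) (mapply (M t) v)
              = mapply (M t) (Gamma Gam y u v).

Definition Omega (lam : R) (a b : vec) : R := lam * (fst a * snd b - snd a * fst b).

From Stdlib Require Import Reals Lra Psatz Classical.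
From Coquelicot Require Import Coquelicot.
Open Scope R_scope.

(* Shears [w |-> w + t det(d, w) d] belong to the flows of [sl(Pi)], and those along [p] fix
   [p]. Invariance of the symmetric bilinear map [Gamma_p] under them kills [Gamma_p(p, p)] and
   makes [Gamma_p(p, .)] proportional to [det(p, .) p]; hence [Gamma_p] is of the model form
   [a (Omega(p,u) v + Omega(p,v) u) + b Omega(p,u) Omega(p,v) p] for some [a, b] depending on
   [p], while at the origin, fixed by every shear, [Gamma] vanishes. A shear carries [p] to any
   [q] with [det(p, q) <> 0] along the segment [[p, q]], and the model is shear-equivariant, so
   [a, b] are the same at all nonzero points of a ball in [U], hence on all of [U] by
   connectedness. The Ricci tensor of the model has symmetric part [(4b + a^2) Omega(p, .)^2],
   so skew-symmetry gives [b = -(a/2)^2], i.e. [c = a/2]. *)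

Definition det (a b : vec) : R := fst a * snd b - snd a * fst b.

Definition perp (p : vec) : vec := (- snd p, fst p).

Lemma vec_eq (a b : vec) : fst a = fst b -> snd a = snd b -> a = b.
Proof. destruct a, b; simpl; intros; subst; reflexivity. Qed.

Lemma vscale_inj (s : R) (a b : vec) : s <> 0 -> vscale s a = vscale s b -> a = b.
Proof.
  intros Hs E; destruct a, b; injection E; intros E2 E1.
  apply vec_eq; simpl; [apply (Rmult_eq_reg_l s) | apply (Rmult_eq_reg_l s)]; auto.
Qed.

Lemma det_perp (p : vec) : det p (perp p) = fst p ^ 2 + snd p ^ 2.
Proof. unfold det, perp; simpl; ring. Qed.

Lemma sum_squares_pos (p : vec) : p <> (0, 0) -> 0 < fst p ^ 2 + snd p ^ 2.
Proof.
  destruct p as [x y]; simpl; intro Hp.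
  destruct (Req_dec x 0); destruct (Req_dec y 0); [subst; tauto | nra | nra | nra].
Qed.

Definition symmetric_at (Gam : christoffel) (p : vec) : Prop :=
  forall k i j, Gam k i j p = Gam k j i p.

(* Cramer's rule [det q1 q2 * u = det u q2 * q1 + det q1 u * q2], applied in both arguments. *)
Lemma Gamma_in_basis Gam p q1 q2 u v : symmetric_at Gam p ->
  vscale (det q1 q2 ^ 2) (Gamma Gam p u v) =
  vadd (vscale (det u q2 * det v q2) (Gamma Gam p q1 q1))
    (vadd (vscale (det u q2 * det q1 v + det q1 u * det v q2) (Gamma Gam p q1 q2))
          (vscale (det q1 u * det q1 v) (Gamma Gam p q2 q2))).
Proof.
  intro Hs; destruct q1, q2, u, v; unfold Gamma, mkvec, sumix, det, vadd, vscale; simpl.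
  rewrite (Hs e1 e2 e1), (Hs e2 e2 e1); apply vec_eq; simpl; ring.
Qed.

Lemma Gamma_eq_of_basis G1 G2 p q1 q2 :
  symmetric_at G1 p -> symmetric_at G2 p -> det q1 q2 <> 0 ->
  Gamma G1 p q1 q1 = Gamma G2 p q1 q1 ->
  Gamma G1 p q1 q2 = Gamma G2 p q1 q2 ->
  Gamma G1 p q2 q2 = Gamma G2 p q2 q2 ->
  forall u v, Gamma G1 p u v = Gamma G2 p u v.
Proof.
  intros S1 S2 Hq E11 E12 E22 u v.
  apply (vscale_inj (det q1 q2 ^ 2)); [now apply pow_nonzero|].
  now rewrite !Gamma_in_basis, E11, E12, E22.
Qed.

Lemma christoffel_eq_of_Gamma_eq G1 G2 p :
  (forall u v, Gamma G1 p u v = Gamma G2 p u v) -> forall k i j, G1 k i j p = G2 k i j p.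
Proof.
  intros E k i j.
  assert (Hc : forall G : christoffel, G k i j p = coord k (Gamma G p (basis i) (basis j))).
  { intro G; destruct k, i, j; unfold Gamma, mkvec, sumix; simpl; ring. }
  now rewrite !Hc, E.
Qed.

Definition shear (d : vec) (t : R) (w : vec) : vec := vadd w (vscale (t * det d w) d).

Definition det_row (d : vec) (j : ix) : R := match j with e1 => - snd d | e2 => fst d end.
Definition shear_generator (d : vec) : mat := fun i j => coord i d * det_row d j.
Definition delta (i j : ix) : R := match i, j with e1, e1 | e2, e2 => 1 | _, _ => 0 end.
(* [shear_generator d] squares to zero, so its exponential is affine in [t]. *)
Definition shear_flow (d : vec) (t : R) : mat := fun i j => delta i j + t * shear_generator d i j.

Lemma shear_generator_sl2 d : in_sl2 (shear_generator d).
Proof. unfold in_sl2, shear_generator; simpl; ring. Qed.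

Lemma shear_flow_exp d : is_exp_flow (shear_generator d) (shear_flow d).
Proof.
  split.
  - intros i j; destruct i, j; unfold shear_flow, delta; simpl; ring.
  - intros t i j; unfold shear_flow.
    auto_derive; [exact I|].
    destruct i, j; unfold sumix, shear_generator, delta; simpl; ring.
Qed.

Lemma mapply_shear_flow d t w : mapply (shear_flow d t) w = shear d t w.
Proof.
  destruct d, w; unfold mapply, shear, shear_flow, shear_generator, delta, det_row, det,
    mkvec, sumix, vadd, vscale; simpl; apply vec_eq; simpl; ring.
Qed.

Lemma shearK d t w : shear d t (shear d (- t) w) = w.
Proof. destruct d, w; unfold shear, det, vadd, vscale; simpl; apply vec_eq; simpl; ring. Qed.

Lemma shear_id d t : shear d t d = d.
Proof. destruct d; unfold shear, det, vadd, vscale; simpl; apply vec_eq; simpl; ring. Qed.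

Lemma shear_origin d t : shear d t (0, 0) = (0, 0).
Proof. destruct d; unfold shear, det, vadd, vscale; simpl; apply vec_eq; simpl; ring. Qed.

Definition shear_invariant_at (Gam : christoffel) (p d : vec) : Prop :=
  forall t u v, Gamma Gam p (shear d t u) (shear d t v) = shear d t (Gamma Gam p u v).

Lemma Gamma_shear_diag Gam p d q t : symmetric_at Gam p ->
  Gamma Gam p (shear d t q) (shear d t q) =
  vadd (Gamma Gam p q q)
    (vadd (vscale (2 * (t * det d q)) (Gamma Gam p d q))
          (vscale ((t * det d q) ^ 2) (Gamma Gam p d d))).
Proof.
  intro Hs; destruct d, q; unfold shear, Gamma, mkvec, sumix, det, vadd, vscale; simpl.
  rewrite (Hs e1 e2 e1), (Hs e2 e2 e1); apply vec_eq; simpl; ring.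
Qed.

(* Compare the coefficients of [t] and [t ^ 2] in the invariance at [q], for [t = 1] and [t = -1]. *)
Lemma shear_invariant_coeffs Gam p d q :
  symmetric_at Gam p -> shear_invariant_at Gam p d -> det d q <> 0 ->
  Gamma Gam p d d = (0, 0) /\
  vscale (2 * det d q) (Gamma Gam p d q) = vscale (det d (Gamma Gam p q q)) d.
Proof.
  intros Hs Hinv Hq.
  pose proof (Hinv 1 q q) as E1; pose proof (Hinv (-1) q q) as E2.
  rewrite Gamma_shear_diag in E1, E2 by exact Hs.
  destruct (Gamma Gam p d d) as [a1 a2], (Gamma Gam p d q) as [b1 b2],
    (Gamma Gam p q q) as [c1 c2], d as [d1 d2].
  unfold shear, det, vadd, vscale in *; simpl in *.
  injection E1; injection E2; intros.
  split; apply vec_eq; simpl; apply (Rmult_eq_reg_l (det (d1, d2) q)); unfold det; simpl; nra.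
Qed.

Definition model_christoffel (lam a b : R) : christoffel := fun l j k r =>
  a * (Omega lam r (basis j) * coord l (basis k) + Omega lam r (basis k) * coord l (basis j))
  + b * (Omega lam r (basis j) * Omega lam r (basis k) * coord l r).

Lemma Gamma_model lam a b p u v :
  Gamma (model_christoffel lam a b) p u v =
  vadd (vscale a (vadd (vscale (Omega lam p u) v) (vscale (Omega lam p v) u)))
       (vscale (b * Omega lam p u * Omega lam p v) p).
Proof.
  destruct p, u, v; unfold Gamma, model_christoffel, Omega, mkvec, sumix, vadd, vscale; simpl.
  apply vec_eq; simpl; ring.
Qed.

Lemma model_symmetric lam a b p : symmetric_at (model_christoffel lam a b) p.
Proof. intros k i j; unfold model_christoffel; ring. Qed.

Lemma Gamma_model_shear lam a b d t p u v :
  Gamma (model_christoffel lam a b) (shear d t p) (shear d t u) (shear d t v) =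
  shear d t (Gamma (model_christoffel lam a b) p u v).
Proof.
  rewrite !Gamma_model.
  destruct d, p, u, v; unfold shear, Omega, det, vadd, vscale; simpl; apply vec_eq; simpl; ring.
Qed.

Lemma Gamma_model_origin lam a b u v :
  Gamma (model_christoffel lam a b) (0, 0) u v = (0, 0).
Proof.
  rewrite Gamma_model; destruct u, v; unfold Omega, vadd, vscale; simpl; apply vec_eq; simpl; ring.
Qed.

Lemma Gamma_model_perp_onto lam p g : lam <> 0 -> p <> (0, 0) ->
  exists a b, Gamma (model_christoffel lam a b) p (perp p) (perp p) = g.
Proof.
  intros Hlam Hp; pose proof (sum_squares_pos p Hp) as HN.
  exists (det p g / (2 * lam * (fst p ^ 2 + snd p ^ 2) ^ 2)),
         (det g (perp p) / (lam ^ 2 * (fst p ^ 2 + snd p ^ 2) ^ 3)).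
  rewrite Gamma_model; destruct p as [x y], g as [g1 g2].
  unfold perp, det, Omega, vadd, vscale in *; simpl in *.
  apply vec_eq; simpl; field; (split; [nra | exact Hlam]).
Qed.

Lemma pd_model lam a b l j k i p :
  pd i (model_christoffel lam a b l j k) p =
  a * (Omega lam (basis i) (basis j) * coord l (basis k)
       + Omega lam (basis i) (basis k) * coord l (basis j))
  + b * (Omega lam (basis i) (basis j) * Omega lam p (basis k) * coord l p
         + Omega lam p (basis j) * Omega lam (basis i) (basis k) * coord l p
         + Omega lam p (basis j) * Omega lam p (basis k) * coord l (basis i)).
Proof.
  unfold pd; apply is_derive_unique.
  destruct p; destruct l, j, k, i; unfold model_christoffel, Omega, vadd, vscale; simpl;
    auto_derive; auto; ring.
Qed.

Lemma Ric_model_diag lam a b j p :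
  Ric (model_christoffel lam a b) j j p = (4 * b + a ^ 2) * Omega lam p (basis j) ^ 2.
Proof.
  unfold Ric, Rm, sumix; rewrite !pd_model.
  destruct p; destruct j; unfold model_christoffel, Omega; simpl; ring.
Qed.

Lemma ball_vec (p r : vec) (e : R) :
  ball p e r <-> Rabs (fst r - fst p) < e /\ Rabs (snd r - snd p) < e.
Proof. reflexivity. Qed.

Lemma locally_coordinate_line (P : vec -> Prop) p i :
  locally p P -> locally 0 (fun t => P (vadd p (vscale t (basis i)))).
Proof.
  intros [e He]; exists e; intros t Ht; apply He, ball_vec.
  change (Rabs (t - 0) < e) in Ht; rewrite Rminus_0_r in Ht.
  destruct i; simpl; rewrite ?Rmult_0_r, ?Rmult_1_r, ?Rplus_0_r, ?Rplus_minus_l, Rminus_diag,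
    Rabs_R0; split; auto; apply cond_pos.
Qed.

Lemma locally_exists_nonzero p (P : vec -> Prop) :
  locally p P -> exists r, r <> (0, 0) /\ P r.
Proof.
  intros [e He]; destruct (classic (p = (0, 0))) as [->|Hp].
  - exists (e / 2, 0); split.
    + intro E; injection E; pose proof (cond_pos e); lra.
    + apply He, ball_vec; simpl; rewrite !Rminus_0_r, Rabs_R0, Rabs_pos_eq;
        pose proof (cond_pos e); lra.
  - exists p; split; [exact Hp | apply He, ball_center].
Qed.

Lemma Ric_locally_ext G1 G2 p :
  locally p (fun r => forall l j k, G1 l j k r = G2 l j k r) ->
  forall j k, Ric G1 j k p = Ric G2 j k p.
Proof.
  intros Hloc j k.
  assert (Hp : forall l j k, G1 l j k p = G2 l j k p)
    by (destruct Hloc as [e He]; apply He, ball_center).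
  assert (Hd : forall i l j k, pd i (G1 l j k) p = pd i (G2 l j k) p).
  { intros i l j' k'; apply Derive_ext_loc.
    apply (filter_imp _ _ (fun t Ht => Ht l j' k') (locally_coordinate_line _ p i Hloc)). }
  unfold Ric, Rm, sumix; rewrite !Hp, !Hd; reflexivity.
Qed.

Lemma scale_between_inv (D s : R) :
  D <> 0 -> Rmin 0 (/ D) <= s <= Rmax 0 (/ D) -> 0 <= s * D <= 1.
Proof.
  intros HD Hs; rewrite <- (Rinv_l D HD).
  destruct (Rtotal_order D 0) as [Hn | [Hz | Hpos]]; [| contradiction |].
  - pose proof (Rinv_lt_0_compat D Hn).
    rewrite Rmin_right, Rmax_left in Hs by lra; split; nra.
  - pose proof (Rinv_0_lt_compat D Hpos).
    rewrite Rmin_left, Rmax_right in Hs by lra; split; nra.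
Qed.

Definition segment (q q' : vec) (l : R) : vec := vadd q (vscale l (vadd q' (vscale (-1) q))).

Lemma Rabs_convex_lt (c x y e l : R) :
  Rabs (x - c) < e -> Rabs (y - c) < e -> 0 <= l <= 1 -> Rabs (x + l * (y + -1 * x) - c) < e.
Proof.
  intros Hx Hy Hl; apply Rabs_def2 in Hx, Hy; apply Rabs_def1;
    destruct (Req_dec l 1) as [-> | Hl1]; nra.
Qed.

Lemma ball_segment (c r r' : vec) (e l : R) :
  ball c e r -> ball c e r' -> 0 <= l <= 1 -> ball c e (segment r r' l).
Proof.
  rewrite !ball_vec; destruct c, r, r'; unfold segment, vadd, vscale; simpl.
  intros [H1 H2] [H3 H4] Hl; split; now apply Rabs_convex_lt.
Qed.

Lemma ball_det_neq0 (c r : vec) (e : posreal) :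
  r <> (0, 0) -> exists m, ball c e m /\ det r m <> 0.
Proof.
  intro Hr; pose proof (cond_pos e) as He.
  assert (Hin : forall h k, Rabs h < e -> Rabs k < e -> ball c e (vadd c (h, k))).
  { intros h k Hh Hk; apply ball_vec; destruct c; unfold vadd; simpl.
    now replace (r0 + h - r0) with h by ring; replace (r1 + k - r1) with k by ring. }
  assert (Hh : Rabs (e / 2) < e) by (rewrite Rabs_pos_eq; lra).
  assert (H0 : Rabs 0 < e) by (rewrite Rabs_R0; lra).
  destruct (Req_dec (det r c) 0) as [Dc | Dc]; [| exists c; split; [apply ball_center | exact Dc]].
  destruct (Req_dec (det r (vadd c (e / 2, 0))) 0) as [D1 | D1];
    [| exists (vadd c (e / 2, 0)); auto].
  exists (vadd c (0, e / 2)); split; auto.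
  intro D2; apply Hr.
  destruct r as [x y], c; unfold det, vadd in *; simpl in *.
  apply vec_eq; simpl; nra.
Qed.

Lemma det_neq0_parallel (r r' m : vec) :
  det r r' = 0 -> r' <> (0, 0) -> det r m <> 0 -> det m r' <> 0.
Proof.
  intros Hrr' Hr' Hrm Hmr'; apply Hr'.
  destruct r as [x y], r' as [x' y'], m as [u w]; unfold det in *; simpl in *.
  apply vec_eq; simpl; apply (Rmult_eq_reg_l (x * w - y * u)); auto.
  - transitivity ((x * y' - y * x') * u - (u * y' - w * x') * x); [ring|].
    rewrite Hrr', Hmr'; ring.
  - transitivity ((x * y' - y * x') * w - (u * y' - w * x') * y); [ring|].
    rewrite Hrr', Hmr'; ring.
Qed.

Definition has_model_form (lam : R) (Gam : christoffel) (a b : R) (p : vec) : Prop :=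
  forall u v, Gamma Gam p u v = Gamma (model_christoffel lam a b) p u v.

Section SL2_invariance.

Variables (lam : R) (U : vec -> Prop) (Gam : christoffel).
Hypothesis inv : forall A : mat, in_sl2 A -> inf_affine_linear U Gam A.
Hypothesis tf : torsion_free U Gam.

Lemma shear_equivariant d t y :
  (forall s, Rmin 0 t <= s <= Rmax 0 t -> U (shear d s y)) ->
  forall u v, Gamma Gam (shear d t y) (shear d t u) (shear d t v) = shear d t (Gamma Gam y u v).
Proof.
  intros Hy u v; rewrite <- !mapply_shear_flow.
  apply (inv _ (shear_generator_sl2 d) _ (shear_flow_exp d)).
  intros s Hs; rewrite mapply_shear_flow; auto.
Qed.

Lemma shear_invariant_at_fixed p d :
  U p -> (forall t, shear d t p = p) -> shear_invariant_at Gam p d.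
Proof.
  intros Hp Hfix t u v; rewrite <- (Hfix t) at 1.
  apply shear_equivariant; intros s _; rewrite Hfix; exact Hp.
Qed.

(* Every shear fixes the origin, so [Gamma Gam (0, 0) d d = 0] for every direction [d]. *)
Lemma model_form_origin a b : U (0, 0) -> has_model_form lam Gam a b (0, 0).
Proof.
  intros H0.
  assert (Hinv0 : forall d, shear_invariant_at Gam (0, 0) d)
    by (intro d; apply shear_invariant_at_fixed; [exact H0 | apply shear_origin]).
  assert (Hdet12 : det (basis e1) (basis e2) <> 0) by (unfold det; simpl; lra).
  assert (Hdet21 : det (basis e2) (basis e1) <> 0) by (unfold det; simpl; lra).
  destruct (shear_invariant_coeffs Gam _ _ _ (tf _ H0) (Hinv0 _) Hdet12) as [G11 G12].
  destruct (shear_invariant_coeffs Gam _ _ _ (tf _ H0) (Hinv0 _) Hdet21) as [G22 _].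
  rewrite G22 in G12.
  intros u v; apply (Gamma_eq_of_basis _ _ _ _ _ (tf _ H0) (model_symmetric lam a b _) Hdet12);
    rewrite ?Gamma_model_origin, ?G11, ?G22; auto.
  apply (vscale_inj (2 * det (basis e1) (basis e2))); [unfold det; simpl; lra|].
  rewrite G12; unfold det, vscale; simpl; apply vec_eq; simpl; ring.
Qed.

(* At [p <> 0] the shears along [p] fix [p]; the symbols at [p] are then pinned down by
   their value on [(perp p, perp p)], which the model matches by choice of [a] and [b]. *)
Lemma model_form_nonzero p :
  lam <> 0 -> U p -> p <> (0, 0) -> exists a b, has_model_form lam Gam a b p.
Proof.
  intros Hlam Hp Hnz.
  destruct (Gamma_model_perp_onto lam p (Gamma Gam p (perp p) (perp p)) Hlam Hnz)
    as [a [b Hqq]].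
  exists a, b.
  assert (Hdet : det p (perp p) <> 0)
    by (rewrite det_perp; apply Rgt_not_eq, sum_squares_pos, Hnz).
  assert (Hmod : shear_invariant_at (model_christoffel lam a b) p p).
  { intros t u v; rewrite <- (shear_id p t) at 1; apply Gamma_model_shear. }
  destruct (shear_invariant_coeffs _ _ _ _ (tf _ Hp)
              (shear_invariant_at_fixed _ _ Hp (shear_id p)) Hdet) as [Gpp Gpq].
  destruct (shear_invariant_coeffs _ _ _ _ (model_symmetric lam a b p) Hmod Hdet)
    as [Mpp Mpq].
  intros u v; apply (Gamma_eq_of_basis _ _ _ _ _ (tf _ Hp) (model_symmetric lam a b p) Hdet).
  - now rewrite Gpp, Mpp.
  - apply (vscale_inj (2 * det p (perp p))); [lra|].
    now rewrite Gpq, Mpq, Hqq.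
  - now rewrite Hqq.
Qed.

(* The shear along [q' - q] with parameter [1 / det (q' - q) q] moves [q] to [q'] along the segment. *)
Lemma model_form_transport a b q q' :
  has_model_form lam Gam a b q -> det q q' <> 0 ->
  (forall l, 0 <= l <= 1 -> U (segment q q' l)) -> has_model_form lam Gam a b q'.
Proof.
  intros Hq Hdet Hseg.
  set (d := vadd q' (vscale (-1) q)).
  assert (HD : det d q <> 0)
    by (unfold d, det in *; destruct q, q'; simpl in *; intro; apply Hdet; lra).
  assert (Hend : shear d (/ det d q) q = q').
  { unfold shear; rewrite Rinv_l by exact HD.
    unfold d, vadd, vscale; destruct q, q'; simpl; apply vec_eq; simpl; ring. }
  assert (Hmove := shear_equivariant d (/ det d q) q).
  rewrite Hend in Hmove.
  intros w z.
  rewrite <- (shearK d (/ det d q) w), <- (shearK d (/ det d q) z), Hmove, Hq, <- Hend,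
    Gamma_model_shear; [reflexivity|].
  intros s Hs; apply Hseg, scale_between_inv; auto.
Qed.

Lemma model_form_ball a b c (e : posreal) r r' :
  (forall s, ball c e s -> U s) -> ball c e r -> ball c e r' ->
  r <> (0, 0) -> r' <> (0, 0) ->
  has_model_form lam Gam a b r -> has_model_form lam Gam a b r'.
Proof.
  intros HU Hr Hr' Hnz Hnz'.
  assert (Hstep : forall s s', ball c e s -> ball c e s' -> det s s' <> 0 ->
            has_model_form lam Gam a b s -> has_model_form lam Gam a b s').
  { intros s s' Hs Hs' Hd HF; apply (model_form_transport a b s s'); auto.
    intros l Hl; apply HU, ball_segment; auto. }
  destruct (Req_dec (det r r') 0) as [D0 | D0]; [| now apply Hstep].
  destruct (ball_det_neq0 c r e Hnz) as [m [Hm Hdm]].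
  intro HF; apply (Hstep m r'); auto; [now apply det_neq0_parallel with r|].
  now apply (Hstep r m).
Qed.

Lemma model_form_connected a b p0 :
  open U -> connected_set U -> U p0 -> p0 <> (0, 0) -> has_model_form lam Gam a b p0 ->
  forall q, U q -> q <> (0, 0) -> has_model_form lam Gam a b q.
Proof.
  intros HU Hconn Hp0 Hnz0 HF0.
  set (V := fun q => locally q (fun r => r <> (0, 0) -> has_model_form lam Gam a b r)).
  set (W := fun q => locally q (fun r => r <> (0, 0) -> ~ has_model_form lam Gam a b r)).
  assert (Hcover : forall q, U q -> V q \/ W q).
  { intros q Hq; destruct (HU q Hq) as [e He].
    destruct (locally_exists_nonzero q _ (locally_ball q e)) as [r0 [Hnzr0 Hr0]].
    destruct (classic (has_model_form lam Gam a b r0)) as [F | F]; [left | right];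
      exists e; intros r Hr Hnz.
    - now apply (model_form_ball a b q e r0 r).
    - intro Fr; apply F, (model_form_ball a b q e r r0); auto. }
  assert (Hdisj : forall q, U q -> V q -> W q -> False).
  { intros q _ HV HW.
    destruct (locally_exists_nonzero q _ (filter_and _ _ HV HW)) as [r [Hnz [F NF]]].
    exact (NF Hnz (F Hnz)). }
  assert (HV0 : V p0).
  { destruct (HU p0 Hp0) as [e He]; exists e; intros r Hr Hnz.
    apply (model_form_ball a b p0 e p0 r); auto; apply ball_center. }
  intros q Hq Hnz; destruct (Hcover q Hq) as [[e He] | HW].
  - exact (He q (ball_center q e) Hnz).
  - exfalso; apply (Hconn V W); eauto; intros x Hx; now apply locally_locally.
Qed.

End SL2_invariance.

Lemma ricci_skew_model_coeff lam a b p : lam <> 0 -> p <> (0, 0) ->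
  (forall j, Ric (model_christoffel lam a b) j j p = 0) -> 4 * b + a ^ 2 = 0.
Proof.
  intros Hlam Hp HR; pose proof (sum_squares_pos p Hp) as HN.
  assert (Hl : 0 < lam ^ 2) by (rewrite <- Rsqr_pow2; now apply Rsqr_pos_lt).
  pose proof (HR e1) as R1; pose proof (HR e2) as R2; rewrite Ric_model_diag in R1, R2.
  apply (Rmult_eq_reg_r (lam ^ 2 * (fst p ^ 2 + snd p ^ 2))); [| nra].
  destruct p; unfold Omega in *; simpl in *; nra.
Qed.

Lemma nabla_const Gam u v0 p : nabla Gam u (fun _ => v0) p = Gamma Gam p (u p) v0.
Proof.
  unfold nabla, ddir, mkvec; rewrite !Derive_const.
  destruct (Gamma Gam p (u p) v0); unfold vadd; simpl; apply vec_eq; simpl; ring.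
Qed.

Theorem lemma10p7 (lam : R) (U : vec -> Prop) (Gam : christoffel) :
  lam <> 0 ->
  open U -> (exists p, U p) -> connected_set U ->
  (forall k i j, smooth_on U (Gam k i j)) ->
  torsion_free U Gam ->
  ricci_skew U Gam ->
  (forall A : mat, in_sl2 A -> inf_affine_linear U Gam A) ->
  exists c : R,
    forall u : vec -> vec, (forall k, smooth_on U (fun p => coord k (u p))) ->
    forall (v0 : vec) (p : vec), U p ->
      nabla Gam u (fun _ => v0) p =
      vadd (vscale (2 * c) (vadd (vscale (Omega lam p (u p)) v0)
                                 (vscale (Omega lam p v0) (u p))))
           (vscale (- c ^ 2 * Omega lam p (u p) * Omega lam p v0) p).
Proof.
  intros Hlam HU [p1 Hp1] Hconn _ Htf Hric Hinv.
  destruct (locally_exists_nonzero p1 _ (HU p1 Hp1)) as [p0 [Hnz0 Hp0]].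
  destruct (model_form_nonzero lam U Gam Hinv Htf p0 Hlam Hp0 Hnz0) as [a [b HF0]].
  assert (Hform : forall p, U p -> has_model_form lam Gam a b p).
  { intros p Hp; destruct (classic (p = (0, 0))) as [-> | Hnz].
    - now apply (model_form_origin lam U Gam Hinv Htf).
    - now apply (model_form_connected lam U Gam Hinv a b p0). }
  assert (Hb : 4 * b + a ^ 2 = 0).
  { apply (ricci_skew_model_coeff lam a b p0 Hlam Hnz0); intro j.
    rewrite <- (Ric_locally_ext Gam).
    - pose proof (Hric p0 Hp0 j j); lra.
    - apply (filter_imp U); [| exact (HU p0 Hp0)].
      intros r Hr; apply christoffel_eq_of_Gamma_eq, Hform, Hr. }
  exists (a / 2); intros u _ v0 p Hp.
  rewrite nabla_const, Hform, Gamma_model by exact Hp.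
  replace (2 * (a / 2)) with a by field.
  now replace (- (a / 2) ^ 2) with b by lra.
Qed.
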